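(* Let $X$ be a non-negative absolutely continuous random variable with PDF $f$, and write $l=\alpha\beta-\alpha-\beta+2$ and $G_{l}(X)=\int_0^\infty f^{l}(x)\,dx$. Let $\delta(\alpha)=\frac{1}{1-\alpha}$. (A) If $0<\alpha<1$, then: $R^\alpha_\beta(X)\le \delta(\alpha)G_{l}(X)$ if $0<\beta<1$ or $\beta\ge 2$; $R^\alpha_\beta(X)\ge \frac12 R^{\frac{\alpha+1}{2}}_{2\beta-1}(X)$ if $\beta\ge1$; and $R^\alpha_\beta(X)\le \frac12 R^{\frac{\alpha+1}{2}}_{2\beta-1}(X)$ if $0<\beta<1$. (B) If $\alpha>1$, then: $R^\alpha_\beta(X)\le \delta(\alpha)G_{l}(X)$ if $1<\beta<2$; $R^\alpha_\beta(X)\le \frac12 R^{\frac{\alpha+1}{2}}_{2\beta-1}(X)$ if $\beta\ge1$; and $R^\alpha_\beta(X)\ge \frac12 R^{\frac{\alpha+1}{2}}_{2\beta-1}(X)$ if $0<\beta<1$.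
   Context: For a non-negative absolutely continuous random variable $X$ with PDF $f$, $0<\alpha<\infty$, $\alpha\ne1$, $\beta>0$, the Rényi information generating function is $R^\alpha_\beta(X)=\frac{1}{1-\alpha}\left(\int_0^\infty f^\alpha(x)\,dx\right)^{\beta-1}$. $G_\gamma(X)=\int_0^\infty f^\gamma(x)dx$ is Golomb's information generating function. All integrals involved are assumed to exist and be finite. *)

From HB Require Import structures.
From mathcomp Require Import all_boot all_order all_algebra.
From mathcomp Require Import all_classical all_reals all_analysis.
Set Implicit Arguments. Unset Strict Implicit. Unset Printing Implicit Defensive.
Import Order.TTheory GRing.Theory Num.Theory.
Local Open Scope classical_set_scope.
Local Open Scope ring_scope.

Definition nonneg_pdf (R : realType) (f : R -> R) : Prop :=
  [/\ measurable_fun setT f,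
      (forall x, 0 <= f x),
      (forall x, x < 0 -> f x = 0),
      (@lebesgue_measure R).-integrable setT (fun x => (f x)%:E) &
      (\int[@lebesgue_measure R]_(x in setT) (f x)%:E = 1)%E].

Definition igf_finite (R : realType) (f : R -> R) (g : R) : Prop :=
  (@lebesgue_measure R).-integrable `[0, +oo[ (fun x => (f x `^ g)%:E).

Definition golomb_igf (R : realType) (f : R -> R) (g : R) : R :=
  Rintegral (@lebesgue_measure R) `[0, +oo[ (fun x => f x `^ g).

Definition renyi_igf (R : realType) (f : R -> R) (a b : R) : R :=
  (1 - a)^-1 * (golomb_igf f a) `^ (b - 1).

(* With [l = 1 + (alpha - 1) (beta - 1)] and [f] a probability density, G_alpha and
   G_l are the means of [h] and [h ^ (beta - 1)] for [h = f ^ (alpha - 1)], so Jensen's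
   inequality for [y ^ (beta - 1)] (convex for [beta <= 1] or [beta >= 2], concave for
   [1 <= beta <= 2]) compares [G_alpha ^ (beta - 1)] with [G_l].  Cauchy-Schwarz gives
   [G_((alpha + 1)/2) ^ 2 <= G_alpha], which after raising to the power [beta - 1]
   compares the two Renyi functions.  Multiplying by [delta], of the sign of [1 - alpha],
   yields the six inequalities. *)

From HB Require Import structures.
From mathcomp Require Import all_boot all_order all_algebra.
From mathcomp Require Import all_classical all_reals all_analysis.
From mathcomp Require Import ring lra.
Import Order.TTheory GRing.Theory Num.Theory.
Local Open Scope ring_scope.

Section powR_inequalities.
Context {R : realType}.

Lemma powR_le_bernoulli (u p : R) : 0 <= u -> 0 <= p <= 1 ->
  u `^ p <= 1 + p * (u - 1).
Proof.
move=> u0 /andP[p0 p1].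
have [->|pn0] := eqVneq p 0; first by rewrite powRr0 mul0r addr0.
have [->|pn1] := eqVneq p 1; first by rewrite powRr1 //; lra.
have p_gt0 : 0 < p by rewrite lt_neqAle eq_sym pn0.
have p_lt1 : p < 1 by rewrite lt_neqAle pn1.
have pinv_gt0 : 0 < p^-1 by rewrite invr_gt0.
have qinv_gt0 : 0 < (1 - p)^-1 by rewrite invr_gt0 subr_gt0.
have conj_pq : p^-1^-1 + (1 - p)^-1^-1 = 1 by rewrite !invrK; lra.
have := conjugate_powR (powR_ge0 u p) ler01 pinv_gt0 qinv_gt0 conj_pq.
by rewrite mulr1 powR1 -powRrM divff ?gt_eqF // powRr1 // !invrK; lra.
Qed.

Lemma bernoulli_le_powR (u p : R) : 0 < u -> (1 <= p \/ p <= 0) ->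
  1 + p * (u - 1) <= u `^ p.
Proof.
(* For [p >= 1] apply the concave case to [u ^ p] and [1/p]; for [p <= 0] use
   [1 + x <= expR x] with [x = p * ln u] and [ln u <= u - 1]. *)
move=> u0 [p1|p0].
  have p0 : 0 < p by lra.
  have p01 : 0 <= p^-1 <= 1 by rewrite invr_ge0 ltW //= invf_le1.
  have := powR_le_bernoulli (u `^ p) p^-1 (powR_ge0 _ _) p01.
  rewrite -powRrM divff ?gt_eqF // powRr1 ?(ltW u0) // => h.
  have := ler_wpM2l (ltW p0) h; rewrite mulrDr mulrA divff ?gt_eqF //; lra.
have ln_le : ln u <= u - 1.
  by have := @le_ln1Dx _ (u - 1); rewrite addrCA subrr addr0; apply; lra.
rewrite /powR gt_eqF //; apply: le_trans (expR_ge1Dx _); rewrite lerD2l.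
by rewrite ler_wnM2l.
Qed.

Lemma powR_tangentE (y m p : R) : 0 < m ->
  m `^ p + p * m `^ (p - 1) * (y - m) = m `^ p * (1 + p * (y / m - 1)).
Proof.
move=> m0; rewrite powRB ?(lt0r_neq0 m0) ?implybT // powRr1 //; last exact: ltW.
by field; rewrite gt_eqF.
Qed.

Lemma powR_scale (y m p : R) : 0 <= y -> 0 < m ->
  y `^ p = m `^ p * (y / m) `^ p.
Proof.
by move=> y0 m0; rewrite -powRM ?divr_ge0 ?(ltW m0) // mulrCA divff ?mulr1 // gt_eqF.
Qed.

Lemma powR_le_tangent (y m p : R) : 0 <= y -> 0 < m ->
  0 <= p <= 1 -> y `^ p <= m `^ p + p * m `^ (p - 1) * (y - m).
Proof.
move=> y0 m0 p01; rewrite powR_tangentE // (powR_scale _ _ p y0 m0).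
rewrite ler_pM2l ?powR_gt0 //; apply: powR_le_bernoulli p01.
exact: divr_ge0 y0 (ltW m0).
Qed.

Lemma tangent_le_powR (y m p : R) : 0 < y -> 0 < m ->
  (1 <= p \/ p <= 0) -> m `^ p + p * m `^ (p - 1) * (y - m) <= y `^ p.
Proof.
move=> y0 m0 hp; rewrite powR_tangentE // (powR_scale _ _ p (ltW y0) m0).
by rewrite ler_pM2l ?powR_gt0 //; apply: bernoulli_le_powR hp; exact: divr_gt0.
Qed.

Lemma le0_ger_powR (r x y : R) : r <= 0 -> 0 < x -> x <= y ->
  y `^ r <= x `^ r.
Proof.
move=> r0 x0 xy; have y0 : 0 < y by exact: lt_le_trans xy.
by rewrite /powR !gt_eqF // ler_expR ler_wnM2l // ler_ln.
Qed.

Lemma powR_mid_le (a t x : R) : 0 < a -> 0 < t -> 0 <= x ->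
  x `^ ((a + 1) / 2) <= 2^-1 * t * x + 2^-1 * t^-1 * x `^ a.
Proof.
move=> a0 t0 x0.
have xD r s : 0 < r + s -> x `^ (r + s) = x `^ r * x `^ s.
  by move=> rs; rewrite powRD // gt_eqF.
set u := x `^ (2^-1); set v := x `^ (a / 2).
have uv : x `^ ((a + 1) / 2) = u * v.
  by rewrite -xD; [congr powR; field | lra].
have uu : u * u = x.
  by rewrite -xD; [rewrite -[2^-1]mul1r -splitr powRr1 | lra].
have vv : v * v = x `^ a.
  by rewrite -xD; [congr powR; field | lra].
rewrite uv -vv -uu.
have amgm : 2 * t * (u * v) <= t ^+ 2 * (u * u) + v * v.
  by have := sqr_ge0 (t * u - v); nra.
suff -> : 2^-1 * t * (u * u) + 2^-1 * t^-1 * (v * v) =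
          (t ^+ 2 * (u * u) + v * v) / (2 * t).
  by rewrite ler_pdivlMr ?mulr_gt0 //; nra.
by field; rewrite gt_eqF.
Qed.

End powR_inequalities.

Section Rintegral_lincomb.
Context {d} {T : measurableType d} {R : realType}.
Variables (mu : {measure set T -> \bar R}) (D : set T).
Hypothesis mD : measurable D.
Variables (a b : R) (f1 f2 : T -> R).
Hypotheses (if1 : mu.-integrable D (EFin \o f1)) (if2 : mu.-integrable D (EFin \o f2)).

Let integrableZl_EFin c (g : T -> R) : mu.-integrable D (EFin \o g) ->
  mu.-integrable D (EFin \o (fun x => c * g x)).
Proof.
move=> ig; have -> : EFin \o (fun x => c * g x) = (fun x => c%:E * (EFin \o g) x)%E.
  by apply/funext => x /=; rewrite EFinM.
exact: integrableZl.
Qed.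

Lemma integrable_lincomb :
  mu.-integrable D (EFin \o (fun x => a * f1 x + b * f2 x)).
Proof.
have -> : EFin \o (fun x => a * f1 x + b * f2 x) =
    (EFin \o (fun x => a * f1 x)) \+ (EFin \o (fun x => b * f2 x)).
  by apply/funext => x /=; rewrite EFinD.
by apply: integrableD; rewrite ?integrableZl_EFin.
Qed.

Lemma Rintegral_lincomb :
  Rintegral mu D (fun x => a * f1 x + b * f2 x) =
    a * Rintegral mu D f1 + b * Rintegral mu D f2.
Proof.
by rewrite RintegralD ?integrableZl_EFin // !RintegralZl.
Qed.

End Rintegral_lincomb.

Local Notation mu := (@lebesgue_measure _).
Local Notation D := (`[0, +oo[%classic : set _).

Section nonneg_pdf.
Context {R : realType} {f : R -> R}.
Hypothesis f_pdf : nonneg_pdf f.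

Let f_ge0 x : 0 <= f x. Proof. by case: f_pdf. Qed.

Lemma pdf_integrable_itv : mu.-integrable D (EFin \o f).
Proof. by case: f_pdf => _ _ _ intf _; exact: integrableS intf. Qed.

Lemma pdf_Rintegral_itv : Rintegral mu D f = 1.
Proof.
case: f_pdf => _ _ f_neg _ f1; rewrite /Rintegral integral_mkcond.
suff -> : (\int[mu]_x ((EFin \o f) \_ D) x = \int[mu]_(x in setT) (f x)%:E)%E
  by rewrite f1.
apply: eq_integral => x _.
rewrite patchE; case: ifPn => // /negP xD.
rewrite f_neg // ltNge; apply/negP => x0; apply: xD.
by rewrite inE /= in_itv /= andbT.
Qed.

Lemma golomb_igf_gt0 g : igf_finite f g -> 0 < golomb_igf f g.
Proof.
move=> ig; rewrite lt_neqAle Rintegral_ge0 ?andbT => [|x _]; last exact: powR_ge0.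
apply/negP => /eqP /esym G0.
have I0 : (\int[mu]_(x in D) (f x `^ g)%:E = 0)%E.
  by rewrite -(fineK (integrable_fin_num _ ig)) // -[fine _]/(golomb_igf f g) G0.
have [mfg _] := integrableP _ _ _ ig.
have fg_ae0 : ae_eq mu D (fun x => (f x `^ g)%:E) (cst 0%E).
  apply/ae_eq_integral_abs => //; rewrite -I0; apply: eq_integral => x _.
  by rewrite gee0_abs // lee_fin powR_ge0.
have f_ae0 : ae_eq mu D (EFin \o f) (cst 0%E).
  by apply: filterS fg_ae0 => x fx0 /fx0 [/powR_eq0_eq0 /= ->].
have [mf _] := integrableP _ _ _ pdf_integrable_itv.
have f0 : (\int[mu]_(x in D) (f x)%:E = 0)%E.
  by rewrite -(integral0 mu D); apply: ae_eq_integral f_ae0 => //; exact: measurable_itv.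
move: pdf_Rintegral_itv.
by rewrite /Rintegral f0 /= => /eqP; rewrite eq_sym oner_eq0.
Qed.

Lemma golomb_igf_mid_sqr_le a : 0 < a -> igf_finite f a ->
  igf_finite f ((a + 1) / 2) -> golomb_igf f ((a + 1) / 2) ^+ 2 <= golomb_igf f a.
Proof.
move=> a0 ia im.
have Ga : 0 <= golomb_igf f a := ltW (golomb_igf_gt0 _ ia).
set t := Num.sqrt (golomb_igf f a).
have t0 : 0 < t by rewrite sqrtr_gt0 golomb_igf_gt0.
have ilin : mu.-integrable D
    (EFin \o (fun x => 2^-1 * t * f x + 2^-1 * t^-1 * f x `^ a)).
  by apply: integrable_lincomb ia; [exact: measurable_itv | exact: pdf_integrable_itv].
(* Integrating [powR_mid_le] with [t = sqrt G_a] gives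
   [G_((a+1)/2) <= (t + G_a / t) / 2 = t]. *)
have Gt : golomb_igf f ((a + 1) / 2) <= t.
  have := le_Rintegral _ im ilin (fun x _ => powR_mid_le _ _ _ a0 t0 (f_ge0 x)).
  move=> /(_ (measurable_itv _)).
  rewrite Rintegral_lincomb ?pdf_Rintegral_itv //; last exact: pdf_integrable_itv.
  suff -> : 2^-1 * t * 1 + 2^-1 / t * golomb_igf f a = t by [].
  rewrite -[golomb_igf f a]sqr_sqrtr // -/t mulr1 expr2 mulrA mulfVK ?gt_eqF //.
  by rewrite -mulrDl -[2^-1]mul1r -splitr mul1r.
rewrite -[golomb_igf f a]sqr_sqrtr // -/t ler_pXn2r // nnegrE ?(ltW t0) //.
exact: ltW (golomb_igf_gt0 _ im).
Qed.

(* Jensen's inequality for [y ^ p] and the probability density [f], applied to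
   [h = f ^ (a - 1)]: [\int f h = G_a] and [\int f h ^ p = G_(1 + (a - 1) p)].
   It is obtained by integrating [f] times the tangent line of [y ^ p] at [G_a]. *)
Section jensen.
Variables (a p : R).
Hypotheses (a_gt0 : 0 < a) (ia : igf_finite f a).

Let m := golomb_igf f a.
Let c := p * m `^ (p - 1).
Let tangent x := (m `^ p - c * m) * f x + c * f x `^ a.

Let m_gt0 : 0 < m. Proof. exact: golomb_igf_gt0. Qed.

Let tangent_integrable : mu.-integrable D (EFin \o tangent).
Proof.
by apply: integrable_lincomb ia; [exact: measurable_itv | exact: pdf_integrable_itv].
Qed.

Let tangent_Rintegral : Rintegral mu D tangent = m `^ p.
Proof.
rewrite Rintegral_lincomb ?pdf_Rintegral_itv //; last exact: pdf_integrable_itv.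
by rewrite -[X in c * X]/m; ring.
Qed.

Let tangentE x : 0 < f x ->
  tangent x = f x * (m `^ p + c * (f x `^ (a - 1) - m)).
Proof. by move=> fx0; rewrite /tangent -(mulr_powRB1 (ltW fx0) a_gt0); ring. Qed.

Let powR_lE x : 0 < f x -> f x `^ (1 + (a - 1) * p) = f x * (f x `^ (a - 1)) `^ p.
Proof.
move=> fx0; rewrite [LHS]powRD ?(lt0r_neq0 fx0) ?implybT //.
by rewrite powRr1 ?(ltW fx0) // powRrM.
Qed.

Lemma golomb_igf_powR_le : (1 <= p \/ p <= 0) -> igf_finite f (1 + (a - 1) * p) ->
  golomb_igf f a `^ p <= golomb_igf f (1 + (a - 1) * p).
Proof.
move=> hp il; rewrite -/m -tangent_Rintegral.
apply: (le_Rintegral _ tangent_integrable il); first exact: measurable_itv.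
move=> x _; have [fx0|fx_gt0] := eqVneq (f x) 0.
  by rewrite /tangent fx0 powR0 ?gt_eqF // !mulr0 addr0 powR_ge0.
have {fx_gt0}fx_gt0 : 0 < f x by rewrite lt0r fx_gt0 f_ge0.
rewrite tangentE // powR_lE // ler_pM2l //.
by apply: tangent_le_powR => //; exact: powR_gt0.
Qed.

Lemma golomb_igf_powR_ge : 0 <= p <= 1 -> igf_finite f (1 + (a - 1) * p) ->
  golomb_igf f (1 + (a - 1) * p) <= golomb_igf f a `^ p.
Proof.
move=> hp il; rewrite -/m -tangent_Rintegral.
apply: (le_Rintegral _ il tangent_integrable); first exact: measurable_itv.
have l_gt0 : 0 < 1 + (a - 1) * p.
  case/andP: hp => p0; rewrite le_eqVlt => /predU1P[-> | p1].
    by rewrite mulr1 addrC subrK.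
  by rewrite mulrBl mul1r; have := mulr_ge0 (ltW a_gt0) p0; lra.
move=> x _; have [fx0|fx_gt0] := eqVneq (f x) 0.
  by rewrite /tangent fx0 !powR0 ?gt_eqF // !mulr0 addr0.
have {fx_gt0}fx_gt0 : 0 < f x by rewrite lt0r fx_gt0 f_ge0.
rewrite tangentE // powR_lE // ler_pM2l //.
by apply: powR_le_tangent => //; exact: powR_ge0.
Qed.

End jensen.

End nonneg_pdf.

Lemma renyi_igf_mid {R : realType} (f : R -> R) (a b : R) : a != 1 ->
  2^-1 * renyi_igf f ((a + 1) / 2) (2 * b - 1) =
  (1 - a)^-1 * (golomb_igf f ((a + 1) / 2) ^+ 2) `^ (b - 1).
Proof.
move=> a1; have G_ge0 : 0 <= golomb_igf f ((a + 1) / 2).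
  by apply: Rintegral_ge0 => x _; exact: powR_ge0.
rewrite /renyi_igf -powR_mulrn // -powRrM mulrA.
have -> : 2%:R * (b - 1) = 2 * b - 1 - 1 :> R by ring.
by congr (_ * _); field; rewrite subr_eq0 eq_sym.
Qed.

Theorem proposition2p3 (R : realType) (f : R -> R) (alpha beta : R) :
  nonneg_pdf f ->
  0 < alpha -> alpha != 1 -> 0 < beta ->
  let l := alpha * beta - alpha - beta + 2 in
  let delta := (1 - alpha)^-1 in
  igf_finite f alpha ->
  igf_finite f l ->
  igf_finite f ((alpha + 1) / 2) ->
  (* (A) 0 < alpha < 1 *)
  (alpha < 1 ->
     ((beta < 1 \/ 2 <= beta) ->
        renyi_igf f alpha beta <= delta * golomb_igf f l) /\
     (1 <= beta ->
        renyi_igf f alpha beta >= 2^-1 * renyi_igf f ((alpha + 1) / 2) (2 * beta - 1)) /\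
     (beta < 1 ->
        renyi_igf f alpha beta <= 2^-1 * renyi_igf f ((alpha + 1) / 2) (2 * beta - 1))) /\
  (* (B) alpha > 1 *)
  (1 < alpha ->
     ((1 < beta < 2) ->
        renyi_igf f alpha beta <= delta * golomb_igf f l) /\
     (1 <= beta ->
        renyi_igf f alpha beta <= 2^-1 * renyi_igf f ((alpha + 1) / 2) (2 * beta - 1)) /\
     (beta < 1 ->
        renyi_igf f alpha beta >= 2^-1 * renyi_igf f ((alpha + 1) / 2) (2 * beta - 1))).
Proof.
move=> f_pdf a_gt0 a_neq1 b_gt0 l delta ia il im.
have lE : l = 1 + (alpha - 1) * (beta - 1) by rewrite /l; ring.
rewrite lE in il *; rewrite renyi_igf_mid // -/delta.
have Gm_gt0 := golomb_igf_gt0 f_pdf _ im.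
have Ga_gt0 := golomb_igf_gt0 f_pdf _ ia.
have Gm_sqr_le := golomb_igf_mid_sqr_le f_pdf _ a_gt0 ia im.
have ler_Gm_Ga : 1 <= beta ->
    (golomb_igf f ((alpha + 1) / 2) ^+ 2) `^ (beta - 1) <= golomb_igf f alpha `^ (beta - 1).
  by move=> b1; apply: ge0_ler_powR Gm_sqr_le;
    rewrite ?nnegrE ?subr_ge0 ?sqr_ge0 ?(ltW Ga_gt0).
have ger_Gm_Ga : beta < 1 ->
    golomb_igf f alpha `^ (beta - 1) <= (golomb_igf f ((alpha + 1) / 2) ^+ 2) `^ (beta - 1).
  by move=> b1; apply: le0_ger_powR Gm_sqr_le; rewrite ?subr_le0 ?(ltW b1) ?exprn_gt0.
split => [a_lt1 | a_gt1].
  have delta_gt0 : 0 < delta by rewrite invr_gt0 subr_gt0.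
  rewrite /renyi_igf -/delta !ler_pM2l //; split => [hb|]; last by split.
  by apply: golomb_igf_powR_le => //; lra.
have delta_lt0 : delta < 0 by rewrite invr_lt0 subr_lt0.
rewrite /renyi_igf -/delta !ler_nM2l //; split => [/andP[hb1 hb2]|]; last by split.
by apply: golomb_igf_powR_ge => //; apply/andP; split; lra.
Qed.
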